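(* Let $P\subset\mathbb R^d$ be a rational $d$-polytope with irredundant presentation $P=\bigcap_{i=1}^m H^{\ge}_{\bm a_i,b_i}$, $(\bm a_i,b_i)\in\mathbb Z^{d+1}$ primitive, and let $\mathcal C_P\subset\mathbb R^{d+1}$ be the cone generated by $\{(\bm x,1):\bm x\in P\}$. For $\bm u,\bm v\in\mathbb R^d$ the following are equivalent: (1) $(\mathcal C_P+(\bm u,0))\cap\mathbb Z^{d+1}=(\mathcal C_P+(\bm v,0))\cap\mathbb Z^{d+1}$; (2) $\lceil(\bm a_i,\bm u)\rceil=\lceil(\bm a_i,\bm v)\rceil$ for all $i=1,\dots,m$ (i.e. $\bm u$ and $\bm v$ lie in the same upper region of $\Lambda_P$).
   Context: $H^{\ge}_{\bm a,b}=\{\bm x\in\mathbb R^d:(\bm a,\bm x)\ge b\}$. For $\bm c\in\mathbb Z^m$, the upper region is $U_{\bm c}=\{\bm x\in\mathbb R^d: c_i-1<(\bm a_i,\bm x)\le c_i \text{ for all } i\}$, and $\Lambda_P$ is the set of upper regions; they partition $\mathbb R^d$. *)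

From HB Require Import structures.
From mathcomp Require Import all_boot all_order all_algebra.
From mathcomp Require Import reals.
Set Implicit Arguments. Unset Strict Implicit. Unset Printing Implicit Defensive.
Import Order.TTheory GRing.Theory Num.Theory.
Local Open Scope ring_scope.

Section PolytopeDefs.
Variables (R : realType) (d m : nat).
Variables (a : 'I_m -> 'I_d -> int) (b : 'I_m -> int).

Definition ipr (ai : 'I_d -> int) (x : 'rV[R]_d) : R :=
  \sum_(j < d) (ai j)%:~R * x 0 j.

Definition polyP (x : 'rV[R]_d) : Prop := forall i, (b i)%:~R <= ipr (a i) x.

Definition polyP_without (i : 'I_m) (x : 'rV[R]_d) : Prop :=
  forall k, k != i -> (b k)%:~R <= ipr (a k) x.

Definition irredundant : Prop :=
  forall i, exists x, polyP_without i x /\ ~ polyP x.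

Definition primitive_row (i : 'I_m) : Prop :=
  forall k : int, (forall j, (k %| a i j)%Z) -> (k %| b i)%Z -> `|k| = 1.

Definition bounded_P : Prop :=
  exists M : R, forall x, polyP x -> forall j, `|x 0 j| <= M.

Definition full_dim_P : Prop :=
  exists x : 'rV[R]_d, exists e : R, 0 < e /\
    forall y : 'rV[R]_d, \sum_(j < d) (y 0 j - x 0 j) ^+ 2 < e ^+ 2 -> polyP y.

Definition d_polytope : Prop := bounded_P /\ full_dim_P.

(* C_P: the cone generated by {(x,1) : x in P} in R^{d+1} = R^d x R,
   i.e. all finite nonnegative combinations of such points *)
Definition coneP (y : 'rV[R]_d) (t : R) : Prop :=
  exists n : nat, exists c : 'I_n -> R, exists p : 'I_n -> 'rV[R]_d,
    (forall k, 0 <= c k) /\ (forall k, polyP (p k)) /\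
    y = \sum_(k < n) c k *: p k /\ t = \sum_(k < n) c k.

Definition shifted_coneP (u : 'rV[R]_d) (y : 'rV[R]_d) (t : R) : Prop :=
  coneP (y - u) t.

Definition lattice_pt (y : 'rV[R]_d) (t : R) : Prop :=
  (forall j, y 0 j \is a Num.int) /\ t \is a Num.int.

End PolytopeDefs.

(* Write P = {x | (a_k, x) >= b_k for all k}, with integer data, and for an
   integer point (p, q) of R^{d+1} let  zform k p q = (a_k, p) - b_k q  be the
   value of the homogenized k-th constraint.  A lattice point (p, q) lies in
   C_P + (u, 0) iff either q = 0 and p = u, or q > 0 and (a_k, u) <= zform k p q
   for every k.  Since zform k p q is an integer, the second condition only
   depends on the ceilings of the (a_k, u), which gives (2) => (1); in the
   degenerate case q = 0 boundedness of P forces u = v.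
   For (1) => (2) we build, for each facet i and each integer c, a lattice point
   (p, q) with q > 0, zform i p q = c and zform k p q >= (a_k, u) for k <> i:
   primitivity of (a_i, b_i) gives an integer point with zform i = 1 (a Bezout
   argument), irredundancy and full-dimensionality give an integer point with
   zform i = 0 and zform k > 0 for k <> i (obtained by rounding scaled copies
   of an interior point and of a point violating only the i-th constraint),
   and a suitable integer combination of the two does the job.  Taking
   c = ceil (a_i, u) separates the two shifted cones unless
   ceil (a_i, v) <= ceil (a_i, u). *)

From Pilot Require Import Defs.
From HB Require Import structures.
From mathcomp Require Import all_boot all_order all_algebra.
From mathcomp Require Import reals.
From mathcomp.algebra_tactics Require Import ring lra.
From mathcomp Require Import zify.
Import Order.TTheory GRing.Theory Num.Theory.
Local Open Scope ring_scope.
Set Implicit Arguments. Unset Strict Implicit.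

Lemma dvdz_foldr_gcdz (s : seq int) (x : int) :
  x \in s -> (foldr gcdz 0 s %| x)%Z.
Proof.
elim: s => //= y s IH; rewrite in_cons => /orP [/eqP ->|xs].
  exact: dvdz_gcdl.
exact: dvdz_trans (dvdz_gcdr _ _) (IH xs).
Qed.

Lemma foldr_gcdz_comb (S : int -> Prop) (s : seq int) :
  S 0 -> (forall x y u w, S x -> S y -> S (u * x + w * y)) ->
  (forall x, x \in s -> S x) -> S (foldr gcdz 0 s).
Proof.
move=> S0 Scomb; elim: s => //= y s IH Ss.
have [u [w <-]] := Bezoutz y (foldr gcdz 0 s).
apply: Scomb; first by apply: Ss; rewrite mem_head.
by apply: IH => x xs; apply: Ss; rewrite in_cons xs orbT.
Qed.

Lemma ler_sum_term (R : numDomainType) n (F : 'I_n -> R) k :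
  (forall l, 0 <= F l) -> F k <= \sum_(l < n) F l.
Proof. by move=> h; rewrite (bigD1 k) //= lerDl; exact: sumr_ge0. Qed.

Lemma exists_nat_gt (R : realType) (x : R) : exists N : nat, x < N%:R.
Proof.
exists (Num.bound `|x|).
by apply: le_lt_trans (ler_norm x) _; exact: archi_boundP.
Qed.

Lemma ceil_eq_le_int (R : realType) (x y : R) (z : int) :
  Num.ceil x = Num.ceil y -> x <= z%:~R -> y <= z%:~R.
Proof. by rewrite -!ceil_le_int => ->. Qed.

Section Pairing.
Variables (R : realType) (d : nat) (ai : 'I_d -> int).

Lemma ipr_add (x y : 'rV[R]_d) : ipr ai (x + y) = ipr ai x + ipr ai y.
Proof. rewrite /ipr -big_split /=; apply: eq_bigr => j _; rewrite mxE; ring. Qed.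

Lemma ipr_sub (x y : 'rV[R]_d) : ipr ai (x - y) = ipr ai x - ipr ai y.
Proof. rewrite /ipr -sumrB /=; apply: eq_bigr => j _; rewrite !mxE; ring. Qed.

Lemma ipr_scale (c : R) (x : 'rV[R]_d) : ipr ai (c *: x) = c * ipr ai x.
Proof. rewrite /ipr mulr_sumr; apply: eq_bigr => j _; rewrite !mxE; ring. Qed.

Lemma ipr_sum n (F : 'I_n -> 'rV[R]_d) :
  ipr ai (\sum_(k < n) F k) = \sum_(k < n) ipr ai (F k).
Proof.
rewrite /ipr exchange_big /=; apply: eq_bigr => j _.
by rewrite summxE mulr_sumr.
Qed.

End Pairing.

Section Polytope.
Variables (R : realType) (d m : nat).
Variables (a : 'I_m -> 'I_d -> int) (b : 'I_m -> int).

Lemma coneP_char (w : 'rV[R]_d) (t : R) :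
  coneP a b w t <->
  (t = 0 /\ w = 0) \/ (0 < t /\ forall k, (b k)%:~R * t <= ipr (a k) w).
Proof.
split.
- move=> [n [c [p [c0 [pP [-> ->]]]]]].
  have [t0|tn0] := eqVneq (\sum_(k < n) c k) 0.
    have cz k : c k = 0 by apply: (psumr_eq0P (fun i _ => c0 i) t0).
    by left; split => //; rewrite big1 // => k _; rewrite cz scale0r.
  right; split; first by rewrite lt0r tn0 sumr_ge0.
  move=> k; rewrite ipr_sum mulr_sumr; apply: ler_sum => l _.
  by rewrite ipr_scale mulrC ler_wpM2l // pP.
- case=> [[-> ->]|[t0 H]].
    exists 0%N, (fun _ => 0), (fun _ => 0); rewrite !big_ord0.
    by split => //; split => // [[]].
  exists 1%N, (fun _ => t), (fun _ => t^-1 *: w); rewrite !big_ord1.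
  split; first by move=> _; apply: ltW.
  split; last by rewrite scalerA mulfV ?gt_eqF // scale1r.
  by move=> _ k; rewrite ipr_scale ler_pdivlMl // mulrC.
Qed.

Definition zform (k : 'I_m) (p : 'I_d -> int) (q : int) : int :=
  \sum_(j < d) a k j * p j - b k * q.

Definition zrow (p : 'I_d -> int) : 'rV[R]_d := \row_j (p j)%:~R.

Lemma zform_intr k p q :
  (zform k p q)%:~R = ipr (a k) (zrow p) - (b k)%:~R * q%:~R :> R.
Proof.
rewrite /zform /ipr intrB intrM; congr (_ - _).
by rewrite mulrz_sumr; apply: eq_bigr => j _; rewrite mxE intrM.
Qed.

Lemma zform_comb k p p' q q' x y :
  zform k (fun j => x * p j + y * p' j) (x * q + y * q') =
  x * zform k p q + y * zform k p' q'.
Proof.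
rewrite /zform (eq_bigr (fun j => x * (a k j * p j) + y * (a k j * p' j))).
  by rewrite big_split /= -!mulr_sumr; ring.
by move=> j _; ring.
Qed.

Lemma lattice_ptP (y : 'rV[R]_d) (t : R) :
  lattice_pt y t <-> exists p q, y = zrow p /\ t = q%:~R.
Proof.
split=> [[hy ht]|[p [q [-> ->]]]]; last first.
  by split; [move=> j; rewrite mxE intr_int | exact: intr_int].
exists (fun j => Num.floor (y 0 j)), (Num.floor t); split; last by rewrite floorK.
by apply/rowP => j; rewrite mxE floorK.
Qed.

Lemma lattice_in_shifted_cone (u : 'rV[R]_d) p q :
  shifted_coneP a b u (zrow p) q%:~R <->
  (q = 0 /\ zrow p = u) \/ (0 < q /\ forall k, ipr (a k) u <= (zform k p q)%:~R).
Proof.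
rewrite /shifted_coneP coneP_char ltr0z.
have ipr_le k : (b k)%:~R * q%:~R <= ipr (a k) (zrow p - u) <->
    ipr (a k) u <= (zform k p q)%:~R.
  by rewrite ipr_sub zform_intr; split => ?; lra.
split=> [[[q0 pu]|[q0 H]]|[[-> ->]|[q0 H]]].
- left; split; first by apply/eqP; rewrite -(intr_eq0 R) q0.
  by apply/eqP; rewrite -subr_eq0 pu.
- by right; split => // k; apply/ipr_le.
- by left; rewrite subrr.
- by right; split => // k; apply/ipr_le.
Qed.

(* The integers attained by the k-th homogenized constraint on lattice points
   form a subgroup of Z containing the a_k j and b_k. *)
Definition zform_value (k : 'I_m) (c : int) : Prop := exists p q, zform k p q = c.

Lemma zform_value_comb k c c' x y :
  zform_value k c -> zform_value k c' -> zform_value k (x * c + y * c').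
Proof.
move=> [p [q <-]] [p' [q' <-]].
by exists (fun j => x * p j + y * p' j), (x * q + y * q'); rewrite zform_comb.
Qed.

(* Primitivity of (a_i, b_i) means exactly that the gcd of its entries is 1,
   so by Bezout the value 1 is attained. *)
Lemma zform_value1 i : primitive_row a b i -> zform_value i 1.
Proof.
move=> hprim; set s := b i :: [seq a i j | j <- enum 'I_d].
have <- : foldr gcdz 0 s = 1.
  have g_dvd_a j : (foldr gcdz 0 s %| a i j)%Z.
    by apply: dvdz_foldr_gcdz; rewrite inE map_f ?mem_enum ?orbT.
  have g_dvd_b : (foldr gcdz 0 s %| b i)%Z by apply: dvdz_foldr_gcdz; exact: mem_head.
  by rewrite -(hprim _ g_dvd_a g_dvd_b).
apply: foldr_gcdz_comb => [|x y u w|x].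
- by exists (fun _ => 0), 0; rewrite /zform big1 ?mulr0 ?subr0 // => j _; rewrite mulr0.
- exact: zform_value_comb.
- rewrite inE => /orP [/eqP ->|/mapP [j _ ->]].
    exists (fun _ => 0), (-1); rewrite /zform big1 ?sub0r; first by ring.
    by move=> l _; rewrite mulr0.
  exists (fun l => (l == j)%:R), 0; rewrite /zform mulr0 subr0.
  rewrite (bigD1 j) //= eqxx mulr1 big1 ?addr0 // => l /negbTE ->.
  by rewrite mulr0.
Qed.

Lemma recession_trivial (x1 z : 'rV[R]_d) :
  bounded_P R a b -> Defs.polyP a b x1 -> (forall k, 0 <= ipr (a k) z) -> z = 0.
Proof.
move=> [M HM] hx1 hz; apply/rowP => j; rewrite mxE.
have [//|nz] := eqVneq (z 0 j) 0; exfalso.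
have M0 : `|x1 0 j| <= M by apply: HM.
have zp : 0 < `|z 0 j| by rewrite normr_gt0.
(* x1 + s z lies in P, but its j-th coordinate is too large *)
set s := (M + `|x1 0 j| + 1) / `|z 0 j|.
have s0 : 0 <= s by rewrite divr_ge0 //; have := normr_ge0 (x1 0 j); lra.
have Ps : Defs.polyP a b (x1 + s *: z).
  move=> k; rewrite ipr_add ipr_scale; have := hx1 k.
  have : 0 <= s * ipr (a k) z by apply: mulr_ge0.
  lra.
have := HM _ Ps j; rewrite !mxE.
have e1 : `|s * z 0 j| = M + `|x1 0 j| + 1.
  by rewrite normrM (ger0_norm s0) mulfVK // gt_eqF.
have e2 : `|s * z 0 j| <= `|x1 0 j + s * z 0 j| + `|x1 0 j|.
  rewrite -(normrN (x1 0 j)); apply: le_trans (ler_normD _ _).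
  by rewrite addrC addKr.
lra.
Qed.

(* In an irredundant description of a nonempty polyhedron no a_k vanishes:
   otherwise the k-th constraint would be always true or always false. *)
Lemma row_nonzero (x1 : 'rV[R]_d) k :
  irredundant R a b -> Defs.polyP a b x1 -> exists j, a k j != 0.
Proof.
move=> hirr hx1.
have [/existsP //|/existsPn za] := boolP [exists j, a k j != 0].
have i0 x : ipr (a k) x = 0.
  by rewrite /ipr big1 // => j _; rewrite (eqP (negPn (za j))) mul0r.
have [x [Hw []]] := hirr k; move=> k'.
have [->|] := eqVneq k' k; last exact: Hw.
by have := hx1 k; rewrite !i0.
Qed.

(* If a ball around x1 lies in P and a_k <> 0, then x1 satisfies the k-th
   constraint strictly: moving x1 slightly against a_k stays in P. *)
Lemma ball_strict (x1 : 'rV[R]_d) (e : R) k :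
  0 < e ->
  (forall y : 'rV[R]_d, \sum_(j < d) (y 0 j - x1 0 j) ^+ 2 < e ^+ 2 -> Defs.polyP a b y) ->
  (exists j, a k j != 0) -> (b k)%:~R < ipr (a k) x1.
Proof.
move=> e0 H [j nz].
set S := \sum_(j < d) ((a k j)%:~R : R) ^+ 2.
have S0 : 0 < S.
  rewrite /S (bigD1 j) //=; apply: ltr_pwDl; first by rewrite exprn_even_gt0 // intr_eq0.
  by apply: sumr_ge0 => l _; rewrite sqr_ge0.
set eta := e / (S + 1).
have eta0 : 0 < eta by rewrite divr_gt0 //; lra.
have ee : e = eta * (S + 1) by rewrite mulfVK //; lra.
have hy : Defs.polyP a b (x1 - eta *: zrow (a k)).
  apply: H.
  have -> : \sum_(j < d) ((x1 - eta *: zrow (a k)) 0 j - x1 0 j) ^+ 2 = eta ^+ 2 * S.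
    by rewrite /S mulr_sumr; apply: eq_bigr => l _; rewrite !mxE; ring.
  rewrite ee; nra.
have := hy k; rewrite ipr_sub ipr_scale.
have -> : ipr (a k) (zrow (a k)) = S.
  by apply: eq_bigr => l _; rewrite mxE expr2.
have : 0 < eta * S by apply: mulr_gt0.
lra.
Qed.

Lemma full_dim_nonempty :
  full_dim_P R a b -> exists x : 'rV[R]_d, Defs.polyP a b x.
Proof.
move=> [x1 [e [e0 He]]]; exists x1.
by apply: He; rewrite big1 ?exprn_gt0 // => j _; rewrite subrr expr0n.
Qed.

Lemma full_dim_interior :
  full_dim_P R a b -> irredundant R a b ->
  exists x1 : 'rV[R]_d, forall k, (b k)%:~R < ipr (a k) x1.
Proof.
move=> hfull hirr; have [x hx] := full_dim_nonempty hfull.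
case: hfull => x1 [e [e0 He]]; exists x1 => k.
exact: ball_strict e0 He (row_nonzero k hirr hx).
Qed.

Definition coef_bound : R := \sum_(k < m) \sum_(j < d) `|(a k j)%:~R|.

Definition round_scaled (N : nat) (x : 'rV[R]_d) : 'I_d -> int :=
  fun j => Num.floor (N%:R * x 0 j).

Lemma round_scaled_err N x k :
  `|(zform k (round_scaled N x) N)%:~R - N%:R * (ipr (a k) x - (b k)%:~R)| <= coef_bound.
Proof.
rewrite zform_intr.
have -> : ipr (a k) (zrow (round_scaled N x)) - (b k)%:~R * (N%:Z)%:~R
    - N%:R * (ipr (a k) x - (b k)%:~R) =
    \sum_(j < d) (a k j)%:~R * ((round_scaled N x j)%:~R - N%:R * x 0 j).
  rewrite (eq_bigr (fun j => (a k j)%:~R * (round_scaled N x j)%:~R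
                              - N%:R * ((a k j)%:~R * x 0 j))); last by move=> j _; ring.
  rewrite sumrB -mulr_sumr /ipr.
  under eq_bigr => j _ do rewrite mxE.
  rewrite -pmulrn; ring.
apply: le_trans (ler_norm_sum _ _ _) _.
apply: le_trans (ler_sum_term (F := fun k => \sum_(j < d) `|((a k j)%:~R : R)|) k _); last first.
  by move=> l; apply: sumr_ge0.
apply: ler_sum => j _; rewrite normrM; apply: ler_piMr => //.
rewrite ler_norml; have := floor_itv (N%:R * x 0 j); rewrite intrD.
by move=> /andP [h1 h2]; apply/andP; split; rewrite /round_scaled; lra.
Qed.

Lemma coef_bound_ge0 : 0 <= coef_bound.
Proof. by apply: sumr_ge0 => k _; apply: sumr_ge0. Qed.

(* A lattice point (p, q), q > 0, strictly inside every constraint: round a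
   large multiple of a strictly interior point. *)
Lemma interior_lattice_pt (x1 : 'rV[R]_d) :
  (forall k, (b k)%:~R < ipr (a k) x1) ->
  exists p q, 0 < q /\ forall k, 0 < zform k p q.
Proof.
move=> hx1; pose gap k := ipr (a k) x1 - (b k)%:~R.
have gap0 k : 0 < gap k by have := hx1 k; rewrite /gap; lra.
have [N HN] := exists_nat_gt (\sum_(k < m) coef_bound / gap k).
have sum0 : 0 <= \sum_(k < m) coef_bound / gap k.
  by apply: sumr_ge0 => k _; rewrite divr_ge0 ?coef_bound_ge0 ?ltW.
exists (round_scaled N x1), N%:Z; split; first by rewrite -(ltr0z R); lra.
move=> k; rewrite -(ltr0z R).
have := round_scaled_err N x1 k; rewrite ler_distl => /andP [h _].
have : coef_bound / gap k < N%:R.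
  apply: le_lt_trans HN; apply: (ler_sum_term (F := fun k => coef_bound / gap k)).
  by move=> l; rewrite divr_ge0 ?coef_bound_ge0 ?ltW.
rewrite ltr_pdivrMr // /gap; lra.
Qed.

(* A lattice point (p, q), q >= 0, far outside the i-th constraint and almost
   inside all the others: round a large multiple of a point violating only
   the i-th constraint. *)
Lemma exterior_lattice_pt i (x0 : 'rV[R]_d) (K : R) :
  polyP_without a b i x0 -> ipr (a i) x0 < (b i)%:~R ->
  exists p q, 0 <= q /\ K < - (zform i p q)%:~R /\
    forall k, k != i -> - coef_bound <= (zform k p q)%:~R.
Proof.
move=> hw hx0; set gap := (b i)%:~R - ipr (a i) x0.
have gap0 : 0 < gap by rewrite /gap; lra.
have [N HN] := exists_nat_gt ((K + coef_bound) / gap).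
have N0 : (0 : R) <= N%:R := ler0n _ _.
exists (round_scaled N x0), N%:Z; split=> //; split.
  have := round_scaled_err N x0 i; rewrite ler_distl => /andP [_ h].
  by move: HN; rewrite ltr_pdivrMr // /gap; lra.
move=> k ki; have := round_scaled_err N x0 k; rewrite ler_distl => /andP [h _].
have : 0 <= N%:R * (ipr (a k) x0 - (b k)%:~R).
  by apply: mulr_ge0 => //; have := hw k ki; lra.
lra.
Qed.

(* Combining the two previous points with suitable positive integer weights
   cancels the i-th value and keeps all other values positive. *)
Lemma facet_combination i p0 q0 p1 q1 (C : R) :
  0 <= C -> 0 <= q0 -> 0 < q1 -> (forall k, 0 < zform k p1 q1) ->
  (forall k, k != i -> - C <= (zform k p0 q0)%:~R) ->
  (zform i p1 q1)%:~R * C < - (zform i p0 q0)%:~R ->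
  exists p q, 0 < q /\ zform i p q = 0 /\ forall k, k != i -> 0 < zform k p q.
Proof.
move=> C0 q00 q10 pos1 low0; rewrite -intrN => big0.
set B := zform i p1 q1 in big0 *; set A := - zform i p0 q0 in big0 *.
have B0 : 0 < B := pos1 i.
have B1 : (1 : R) <= B%:~R by rewrite ler1z; lia.
have A0 : 0 < A by rewrite -(ltr0z R); nra.
exists (fun j => B * p0 j + A * p1 j), (B * q0 + A * q1); split; first by nia.
split; first by rewrite zform_comb /A /B; ring.
move=> k ki; rewrite zform_comb -(ltr0z R) intrD !intrM.
have L1 : (1 : R) <= (zform k p1 q1)%:~R by rewrite ler1z; have := pos1 k; lia.
have := low0 k ki; have : (0 : R) <= A%:~R by rewrite ler0z; lia.
nra.
Qed.

Lemma facet_lattice_pt i :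
  full_dim_P R a b -> irredundant R a b ->
  exists p q, 0 < q /\ zform i p q = 0 /\ forall k, k != i -> 0 < zform k p q.
Proof.
move=> hfull hirr.
have [x1 hx1] := full_dim_interior hfull hirr.
have [p1 [q1 [q10 pos1]]] := interior_lattice_pt hx1.
have [x0 [hw hn]] := hirr i.
have hx0 : ipr (a i) x0 < (b i)%:~R.
  rewrite ltNge; apply/negP => h; apply: hn => k.
  by have [->|] := eqVneq k i; [| exact: hw].
have [p0 [q0 [q00 [big0 low0]]]] :=
  exterior_lattice_pt ((zform i p1 q1)%:~R * coef_bound) hw hx0.
exact: facet_combination coef_bound_ge0 q00 q10 pos1 low0 big0.
Qed.

(* For each facet i and integer c there is a lattice point (p, q), q > 0,
   with i-th value c and k-th value at least (a_k, u) for every k <> i: add a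
   large multiple of the facet point to c times a point of i-th value 1. *)
Lemma separating_lattice_pt i (u : 'rV[R]_d) (c : int) :
  full_dim_P R a b -> irredundant R a b -> primitive_row a b i ->
  exists p q, 0 < q /\ zform i p q = c /\
    forall k, k != i -> ipr (a k) u <= (zform k p q)%:~R.
Proof.
move=> hfull hirr hprim.
have [y0 [t0 val1]] := zform_value1 hprim.
have [p [q [q0 [val0 pos]]]] := facet_lattice_pt i hfull hirr.
pose dev k := `|ipr (a k) u - (c * zform k y0 t0)%:~R|.
have [N HN] := exists_nat_gt (\sum_(k < m) dev k + `|(c * t0)%:~R|).
have N0 : (0 : R) <= N%:R := ler0n _ _.
have sum0 : 0 <= \sum_(k < m) dev k by apply: sumr_ge0 => k _; exact: normr_ge0.
have devN k : dev k <= N%:R.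
  have := ler_sum_term (F := dev) k (fun l => normr_ge0 _).
  have := normr_ge0 ((c * t0)%:~R : R); lra.
exists (fun j => c * y0 j + N%:Z * p j), (c * t0 + N%:Z * q); split.
  rewrite -(ltr0z R) intrD [X in _ + X]intrM -pmulrn.
  have q1 : (1 : R) <= q%:~R by rewrite ler1z.
  have := ler_norm (- ((c * t0)%:~R : R)); rewrite normrN; nra.
split; first by rewrite zform_comb val1 val0; ring.
move=> k ki; rewrite zform_comb intrD [X in _ + X]intrM -pmulrn.
have L1 : (1 : R) <= (zform k p q)%:~R by rewrite ler1z; exact: pos.
have := ler_norm (ipr (a k) u - ((c * zform k y0 t0)%:~R : R)).
have := devN k; rewrite /dev; nra.
Qed.

(* (2) => (1): membership of a lattice point only depends on the ceilings. *)
Lemma same_ceil_lattice_pts (u v y : 'rV[R]_d) (t : R) :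
  d_polytope R a b ->
  (forall k, Num.ceil (ipr (a k) u) = Num.ceil (ipr (a k) v)) ->
  lattice_pt y t -> shifted_coneP a b u y t -> shifted_coneP a b v y t.
Proof.
move=> [hb hfull] hceil /lattice_ptP [p [q [-> ->]]].
rewrite !lattice_in_shifted_cone => -[[q0 pu]|[q0 H]]; last first.
  by right; split => // k; exact: ceil_eq_le_int (hceil k) (H k).
(* at height 0, u = p is integral, so a_k (u - v) >= 0 for all k *)
left; split => //; rewrite pu; apply/eqP; rewrite -subr_eq0; apply/eqP.
have [x hx] := full_dim_nonempty hfull.
apply: (recession_trivial hb hx) => k.
have hu : ipr (a k) u <= (zform k p 0)%:~R by rewrite zform_intr pu mulr0 subr0.
have := ceil_eq_le_int (hceil k) hu; rewrite ipr_sub zform_intr pu; lra.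
Qed.

(* (1) => (2), one inequality: the separating lattice point for
   c = ceil (a_i, u) lies in C_P + (u, 0), hence in C_P + (v, 0). *)
Lemma lattice_pts_ceil_le (u v : 'rV[R]_d) i :
  full_dim_P R a b -> irredundant R a b -> primitive_row a b i ->
  (forall y t, lattice_pt y t -> shifted_coneP a b u y t -> shifted_coneP a b v y t) ->
  Num.ceil (ipr (a i) v) <= Num.ceil (ipr (a i) u).
Proof.
move=> hfull hirr hprim incl.
have [p [q [q0 [vali valk]]]] :=
  separating_lattice_pt u (Num.ceil (ipr (a i) u)) hfull hirr hprim.
have hu : shifted_coneP a b u (zrow p) q%:~R.
  apply/lattice_in_shifted_cone; right; split => // k.
  have [->|] := eqVneq k i; last exact: valk.
  by rewrite vali; exact: ceil_ge.
have lat : lattice_pt (zrow p) q%:~R by apply/lattice_ptP; exists p, q.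
move: (incl _ _ lat hu) => /lattice_in_shifted_cone [[q00 _]|[_ H]].
  by move: q0; rewrite q00 ltxx.
by rewrite ceil_le_int -vali; exact: H.
Qed.

End Polytope.

Theorem mainTheorem3 (R : realType) (d m : nat)
    (a : 'I_m -> 'I_d -> int) (b : 'I_m -> int)
    (hpoly : d_polytope R a b)
    (hirr : irredundant R a b)
    (hprim : forall i, primitive_row a b i)
    (u v : 'rV[R]_d) :
  (forall (y : 'rV[R]_d) (t : R), lattice_pt y t ->
     (shifted_coneP a b u y t <-> shifted_coneP a b v y t))
  <->
  (forall i : 'I_m, Num.ceil (ipr (R:=R) (a i) u) = Num.ceil (ipr (R:=R) (a i) v)).
Proof.
have [_ hfull] := hpoly.
split=> [same i | hceil y t hl].
  apply/eqP; rewrite eq_le; apply/andP; split.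
    by apply: lattice_pts_ceil_le hfull hirr (hprim i) _ => y t /same [].
  by apply: lattice_pts_ceil_le hfull hirr (hprim i) _ => y t /same [].
by split; apply: same_ceil_lattice_pts hpoly _ hl => k; rewrite hceil.
Qed.
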